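(* Let $\Omega$ be a measurable space with reference measure $\mathrm{d}\mathbf{y}$, let $\Theta$ be a parameter set, and for each $\bm{\theta}\in\Theta$ let $f_{\bm{\theta}}(\cdot\mid\cdot):\Omega\times\Omega\to\mathbb{R}$ be such that $0<\int_\Omega\exp\{f_{\bm{\theta}}(\mathbf{y}\mid\mathbf{u})\}\,\mathrm{d}\mathbf{y}<\infty$ for all $\mathbf{u}\in\Omega$. Given a fixed initial point $\mathbf{y}_0$ and observations $\mathbf{y}_1,\ldots,\mathbf{y}_n\in\Omega$, let $$\mathcal{L}(\bm{\theta})=\sum_{t=1}^n\left[f_{\bm{\theta}}(\mathbf{y}_t\mid\mathbf{y}_{t-1})-\log\int_\Omega\exp\{f_{\bm{\theta}}(\mathbf{y}\mid\mathbf{y}_{t-1})\}\,\mathrm{d}\mathbf{y}\right].$$ Let $\mathcal{F}$ be a set of functions $\Omega\to\mathbb{R}$ containing, for every $\bm{\theta}\in\Theta$, the function $\chi_{\bm{\theta}}(\mathbf{u})=-\log\int_\Omega\exp\{f_{\bm{\theta}}(\mathbf{y}\mid\mathbf{u})\}\,\mathrm{d}\mathbf{y}$. For $\bm{\theta}\in\Theta$ and $\chi\in\mathcal{F}$ define $$\mathcal{M}_\chi(\bm{\theta},\chi)=\sum_{t=1}^n\{f_{\bm{\theta}}(\mathbf{y}_t\mid\mathbf{y}_{t-1})+\chi(\mathbf{y}_{t-1})\}-\int_\Omega\sum_{t=1}^n\exp\{f_{\bm{\theta}}(\mathbf{y}\mid\mathbf{y}_{t-1})+\chi(\mathbf{y}_{t-1})\}\,\mathrm{d}\mathbf{y}.$$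 Then the set of points $\bm{\theta}^\star\in\operatorname{argmax}_{\bm{\theta}\in\Theta}\mathcal{L}(\bm{\theta})$ coincides with the set of points $\tilde{\bm{\theta}}$ such that $(\tilde{\bm{\theta}},\chi)\in\operatorname{argmax}_{\bm{\theta}\in\Theta,\chi\in\mathcal{F}}\mathcal{M}_\chi(\bm{\theta},\chi)$ for some $\chi\in\mathcal{F}$.
   Context: $\mathcal{L}$ is the log-likelihood of a Markov chain with unnormalised transition density $\propto\exp\{f_{\bm{\theta}}(\mathbf{y}_t\mid\mathbf{y}_{t-1})\}$. *)

From HB Require Import structures.
From mathcomp Require Import all_boot all_order all_algebra.
From mathcomp Require Import all_classical all_reals all_analysis.
Set Implicit Arguments. Unset Strict Implicit. Unset Printing Implicit Defensive.
Import Order.TTheory GRing.Theory Num.Theory.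
Local Open Scope classical_set_scope.
Local Open Scope ring_scope.

Definition argmax (T : Type) (d : Order.disp_t) (V : porderType d)
  (S : set T) (g : T -> V) : set T :=
  [set x | S x /\ forall x', S x' -> (g x' <= g x)%O].

Section MarkovLik.
Context {R : realType} {d : measure_display} {Omega : measurableType d}.
Context (mu : {measure set Omega -> \bar R}) {Theta : Type}.
(* f th y u  stands for  f_theta(y | u) *)
Context (f : Theta -> Omega -> Omega -> R).

Definition normconst (th : Theta) (u : Omega) : \bar R :=
  (\int[mu]_z (expR (f th z u))%:E)%E.

Definition chi_theta (th : Theta) (u : Omega) : R :=
  - ln (fine (normconst th u)).

Definition loglik (y : nat -> Omega) (n : nat) (th : Theta) : R :=
  \sum_(1 <= t < n.+1) (f th (y t) (y t.-1) - ln (fine (normconst th (y t.-1)))).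

Definition Mchi (y : nat -> Omega) (n : nat) (th : Theta) (chi : Omega -> R)
  : \bar R :=
  ((\sum_(1 <= t < n.+1) (f th (y t) (y t.-1) + chi (y t.-1)))%:E
   - \int[mu]_z (\sum_(1 <= t < n.+1) expR (f th z (y t.-1) + chi (y t.-1)))%:E)%E.
End MarkovLik.

(* For c > 0 the concave map a |-> a - e^a c is maximised at a = -ln c with
   value -ln c - 1.  Applied termwise with c the normalising integral at
   y_{t-1}, this gives M_chi(theta, chi) <= L(theta) - n, with equality for
   chi = chi_theta.  So L - n is the profile of M_chi over chi, attained inside
   F, and maximisers of a function and of its profile correspond. *)

From HB Require Import structures.
From mathcomp Require Import all_boot all_order all_algebra.
From mathcomp Require Import all_classical all_reals all_analysis.
From mathcomp Require Import lra measurable_realfun.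
Set Implicit Arguments. Unset Strict Implicit. Unset Printing Implicit Defensive.
Import Order.TTheory GRing.Theory Num.Theory.
Local Open Scope classical_set_scope.
Local Open Scope ring_scope.

Lemma argmax_mono (T : Type) (d d' : Order.disp_t)
    (V : porderType d) (W : porderType d') (S : set T) (g : T -> V) (phi : V -> W) :
  {mono phi : x y / (x <= y)%O} -> argmax S (phi \o g) = argmax S g.
Proof.
move=> phi_mono; apply/seteqP; split=> x [Sx gx]; split=> // x' Sx'.
- by rewrite -phi_mono; exact: gx.
- by rewrite /= phi_mono; exact: gx.
Qed.

Lemma argmax_profile (A B : Type) (d : Order.disp_t) (V : porderType d)
    (F : set B) (M : A * B -> V) (G : A -> V) (h : A -> B) :
  (forall a, F (h a)) -> (forall a b, (M (a, b) <= G a)%O) ->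
  (forall a, M (a, h a) = G a) ->
  argmax setT G = [set a | exists b, F b /\ argmax (setT `*` F) M (a, b)].
Proof.
move=> Fh M_le M_h; apply/seteqP; split=> a /=.
- move=> [_ Gmax]; exists (h a); split=> //.
  split=> [|[a' b'] [_ Fb']]; first exact: (conj I (Fh a)).
  by rewrite M_h; apply: le_trans (M_le a' b') (Gmax a' _).
- move=> [b [_ [_ Mmax]]]; split=> // a' _.
  by rewrite -M_h; apply: le_trans (Mmax (a', h a') (conj I (Fh a'))) (M_le a b).
Qed.

Lemma subr_expRM_le (R : realType) (a c : R) :
  0 < c -> a - expR a * c <= - ln c - 1.
Proof.
move=> c_gt0; have := expR_ge1Dx (a + ln c).
by rewrite expRD lnK ?posrE //; lra.
Qed.

Lemma subr_expRM_lnN (R : realType) (c : R) :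
  0 < c -> - ln c - expR (- ln c) * c = - ln c - 1.
Proof. by move=> c_gt0; rewrite expRN lnK ?posrE // mulVf ?gt_eqF. Qed.

Lemma measurable_fun_EFin_expR (R : realType) (d : measure_display)
    (T : measurableType d) (g : T -> R) :
  measurable_fun setT g -> measurable_fun setT (fun z => (expR (g z))%:E).
Proof. by move=> mg; apply/measurable_EFinP; exact: measurableT_comp. Qed.

Section MarkovLikSurrogate.
Variables (R : realType) (d : measure_display) (Omega : measurableType d)
  (mu : {measure set Omega -> \bar R}) (Theta : Type)
  (f : Theta -> Omega -> Omega -> R).
Hypothesis f_meas : forall th u, measurable_fun setT (fun z => f th z u).
Hypothesis f_norm : forall th u,
  (0 < normconst mu f th u)%E /\ (normconst mu f th u < +oo)%E.
Variables (y : nat -> Omega) (n : nat).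

Let c th u := fine (normconst mu f th u).

Lemma fine_normconst_gt0 th u : 0 < c th u.
Proof. by have [? ?] := f_norm th u; apply: fine_gt0; apply/andP. Qed.

Lemma normconstE th u : normconst mu f th u = (c th u)%:E.
Proof. by have [? ?] := f_norm th u; rewrite fineK // ge0_fin_numE // ltW. Qed.

Lemma Mchi_sum th chi : Mchi mu f y n th chi =
  (\sum_(1 <= t < n.+1) (f th (y t) (y t.-1) + chi (y t.-1)
      - expR (chi (y t.-1)) * c th (y t.-1)))%:E.
Proof.
rewrite /Mchi sumrB EFinB; congr (_ - _)%E.
under eq_integral do rewrite -sumEFin.
rewrite ge0_integral_sum //; last first.
  by move=> t; apply: measurable_fun_EFin_expR; exact: measurable_funD.
rewrite -sumEFin; apply: eq_bigr => t _.
under eq_integral do rewrite expRD mulrC EFinM.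
rewrite ge0_integralZl_EFin //; last exact: measurable_fun_EFin_expR (f_meas _ _).
by move: (normconstE th (y t.-1)); rewrite /normconst => ->.
Qed.

Lemma loglik_subn th : loglik mu f y n th - n%:R =
  \sum_(1 <= t < n.+1) (f th (y t) (y t.-1) - ln (c th (y t.-1)) - 1).
Proof. by rewrite /loglik [RHS]sumrB sumr_const_nat subn1. Qed.

Lemma Mchi_le_loglik th chi :
  (Mchi mu f y n th chi <= (loglik mu f y n th - n%:R)%:E)%E.
Proof.
rewrite Mchi_sum loglik_subn lee_fin; apply: ler_sum => t _.
by have := subr_expRM_le (chi (y t.-1)) (fine_normconst_gt0 th (y t.-1)); lra.
Qed.

Lemma Mchi_chi_theta th :
  Mchi mu f y n th (chi_theta mu f th) = (loglik mu f y n th - n%:R)%:E.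
Proof.
rewrite Mchi_sum loglik_subn.
congr (_%:E); apply: eq_bigr => t _; rewrite /chi_theta -/(c th _).
by have := subr_expRM_lnN (fine_normconst_gt0 th (y t.-1)); lra.
Qed.

End MarkovLikSurrogate.

Theorem corollary1 (R : realType) (d : measure_display) (Omega : measurableType d)
  (mu : {measure set Omega -> \bar R}) (Theta : Type)
  (f : Theta -> Omega -> Omega -> R)
  (f_meas : forall th u, measurable_fun setT (fun z => f th z u))
  (f_norm : forall th u,
     (0 < normconst mu f th u)%E /\ (normconst mu f th u < +oo)%E)
  (y : nat -> Omega) (n : nat)
  (F : set (Omega -> R))
  (hF : forall th, F (chi_theta mu f th)) :
  argmax setT (loglik mu f y n) =
  [set tht | exists chi, F chi /\
     argmax (setT `*` F) (fun p : Theta * (Omega -> R) => Mchi mu f y n p.1 p.2)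
       (tht, chi)].
Proof.
pose shift (x : R) := (x - n%:R)%:E.
have shift_mono : {mono shift : x y / (x <= y)%O}.
  by move=> a b; rewrite /shift lee_fin lerD2r.
rewrite -(argmax_mono _ _ shift_mono).
apply: (argmax_profile (h := chi_theta mu f)) => //.
- exact: Mchi_le_loglik.
- exact: Mchi_chi_theta.
Qed.
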